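(* Let $A$ be a $2\times n$ array with pairwise distinct entries and $k\ge 1$. Then the graph $G_{12}$ on $A$ is a $k$-page graph, i.e. there are no $k+1$ edges $(i_1,j_1),\dots,(i_{k+1},j_{k+1})\in E(G_{12})$ with $i_1<i_2<\dots<i_{k+1}<j_1<j_2<\dots<j_{k+1}$.
   Context: For a $2\times n$ array $A$ with distinct entries from a total order, the graph $G_{12}$ has vertex set $\{1,\dots,n\}$, and $(i,j)$ with $i<j$ is an edge iff (i) $A[1][i]<A[2][j]$; (ii) at most $k-1$ positions in $A[1..2][i..j]$ (rows 1 and 2, columns $i..j$) hold values larger than both $A[1][i]$ and $A[2][j]$; and (iii) there is no $j'>i$ such that $(i,j')$ satisfies (i) and (ii) and $A[1][i]<A[2][j']<A[2][j]$. *)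

From HB Require Import structures.
From mathcomp Require Import all_boot all_order all_algebra.
Set Implicit Arguments. Unset Strict Implicit. Unset Printing Implicit Defensive.
Import Order.TTheory.

(* A 2 x n array with entries in a totally ordered type T is a matrix
   'M[T]_(2, n); rows are indexed by 'I_2 (row 1 = ord0, row 2 = ord_max),
   columns by 'I_n (0-indexed: column c here is column c+1 of the paper). *)

Definition row1 : 'I_2 := ord0.
Definition row2 : 'I_2 := ord_max.

Definition distinct_entries d (T : orderType d) n (A : 'M[T]_(2, n)) : Prop :=
  injective (fun p : 'I_2 * 'I_n => A p.1 p.2).

Definition cond_i d (T : orderType d) n (A : 'M[T]_(2, n)) (i j : 'I_n) : bool :=
  (A row1 i < A row2 j)%O.

Definition cond_ii d (T : orderType d) n (A : 'M[T]_(2, n)) (k : nat) (i j : 'I_n) : bool :=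
  #|[set p : 'I_2 * 'I_n | [&& (i <= p.2)%N, (p.2 <= j)%N,
                             (A row1 i < A p.1 p.2)%O & (A row2 j < A p.1 p.2)%O]]|
   <= k - 1.

Definition cond_iii d (T : orderType d) n (A : 'M[T]_(2, n)) (k : nat) (i j : 'I_n) : bool :=
  ~~ [exists j' : 'I_n, [&& (i < j')%N, cond_i A i j', cond_ii A k i j',
                           (A row1 i < A row2 j')%O & (A row2 j' < A row2 j)%O]].

Definition G12_edge d (T : orderType d) n (A : 'M[T]_(2, n)) (k : nat) (i j : 'I_n) : bool :=
  [&& (i < j)%N, cond_i A i j, cond_ii A k i j & cond_iii A k i j].

(* Among k+1 pairwise crossing edges (I t, J t), pick the one whose
   row-2 endpoint A[2][J t] is smallest.  If some later edge (I s, J s)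
   has A[1][I s] < A[2][J t], then J t is a better second endpoint for
   I s than J s, contradicting condition (iii) of that edge.  Otherwise
   the k entries A[2][J s] (s < t) and A[1][I s] (s > t) all lie in the
   columns I t .. J t and exceed both endpoints of the edge (I t, J t),
   contradicting condition (ii) for it. *)

From Pilot Require Import Defs.
From HB Require Import structures.
From mathcomp Require Import all_boot all_order all_algebra.
Import Defs Order.TTheory.

Set Implicit Arguments.
Unset Strict Implicit.
Unset Printing Implicit Defensive.

Section IncreasingOrdinalMaps.

Variables (m n : nat) (F : 'I_m -> 'I_n).
Hypothesis F_incr : forall s t : 'I_m, (s < t)%N -> (F s < F t)%N.

Lemma incr_ord_leq (s t : 'I_m) : (s <= t)%N -> (F s <= F t)%N.
Proof. by have := @le_mono _ _ _ _ F F_incr s t; rewrite !leEord => ->. Qed.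

Lemma incr_ord_inj : injective F.
Proof. exact: inc_inj (@le_mono _ _ _ _ F F_incr). Qed.

End IncreasingOrdinalMaps.

Section Dominators.

Variables (d : Order.disp_t) (T : orderType d) (n : nat) (A : 'M[T]_(2, n)).

Definition dominators (i j : 'I_n) : {set 'I_2 * 'I_n} :=
  [set p : 'I_2 * 'I_n | [&& (i <= p.2)%N, (p.2 <= j)%N,
                           (A row1 i < A p.1 p.2)%O & (A row2 j < A p.1 p.2)%O]].

Lemma cond_iiE k i j : cond_ii A k i j = (#|dominators i j| <= k - 1).
Proof. by []. Qed.

Lemma dominators_shrink (i i' j : 'I_n) :
  (i <= i')%N -> cond_i A i j -> dominators i' j \subset dominators i j.
Proof.
move=> le_ii' lt_ij; apply/subsetP => p; rewrite !inE.
case/and4P=> le_i'p le_pj _ lt_jp.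
by rewrite (leq_trans le_ii' le_i'p) le_pj (lt_trans lt_ij lt_jp) lt_jp.
Qed.

Lemma G12_edge_no_better_partner k (i j i' j' : 'I_n) :
  G12_edge A k i j -> G12_edge A k i' j' ->
  (i <= i')%N -> (i' < j)%N -> (A row1 i' < A row2 j)%O ->
  (A row2 j < A row2 j')%O -> False.
Proof.
case/and4P=> _ Alt_ij dom_ij _ /and4P[_ _ _ /negP not_better].
move=> le_ii' lt_i'j Alt_i'j Alt_jj'; apply: not_better.
apply/existsP; exists j; rewrite lt_i'j /cond_i Alt_i'j Alt_jj' !andbT /=.
by rewrite cond_iiE (leq_trans (subset_leq_card (dominators_shrink le_ii' Alt_ij))).
Qed.

Hypothesis A_inj : distinct_entries A.

Lemma distinct_lt (p q : 'I_2 * 'I_n) :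
  p != q -> (A p.1 p.2 <= A q.1 q.2)%O -> (A p.1 p.2 < A q.1 q.2)%O.
Proof. by move=> pq; rewrite lt_neqAle => ->; rewrite andbT (inj_eq A_inj). Qed.

End Dominators.

Section CrossingEdges.

Variables (d : Order.disp_t) (T : orderType d) (n k : nat) (A : 'M[T]_(2, n)).
Variables (I J : 'I_k.+1 -> 'I_n).
Hypotheses (A_inj : distinct_entries A)
  (edgeIJ : forall t, G12_edge A k (I t) (J t))
  (I_incr : forall s t : 'I_k.+1, (s < t)%N -> (I s < I t)%N)
  (J_incr : forall s t : 'I_k.+1, (s < t)%N -> (J s < J t)%N)
  (IJ_cross : (I ord_max < J ord0)%N).

Lemma crossing_lt (s t : 'I_k.+1) : (I s < J t)%N.
Proof.
have le_I : (I s <= I ord_max)%N by apply: incr_ord_leq; rewrite // -ltnS.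
have le_J : (J ord0 <= J t)%N by exact: incr_ord_leq.
exact: leq_ltn_trans le_I (leq_trans IJ_cross le_J).
Qed.

Variable t : 'I_k.+1.
Hypothesis J_argmin : forall s, (A row2 (J t) <= A row2 (J s))%O.

Lemma J_argmin_lt (s : 'I_k.+1) : s != t -> (A row2 (J t) < A row2 (J s))%O.
Proof.
move=> st; apply: (distinct_lt A_inj (p := (row2, J t)) (q := (row2, J s))).
  by rewrite xpair_eqE eqxx /= (inj_eq (incr_ord_inj J_incr)) eq_sym.
exact: J_argmin.
Qed.

Lemma no_late_edge_below :
  ~ exists2 s : 'I_k.+1, (t < s)%N & (A row1 (I s) < A row2 (J t))%O.
Proof.
case=> s lt_ts lt_s.
apply: (G12_edge_no_better_partner (edgeIJ t) (edgeIJ s) _ (crossing_lt s t) lt_s).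
  exact: incr_ord_leq (ltnW lt_ts).
by apply: J_argmin_lt; rewrite neq_ltn lt_ts orbT.
Qed.

Definition witness (s : 'I_k.+1) : 'I_2 * 'I_n :=
  if (s < t)%N then (row2, J s) else (row1, I s).

Lemma witness_inj : injective witness.
Proof.
move=> x y; rewrite /witness.
by case: ifP; case: ifP => _ _ [] //; apply/incr_ord_inj.
Qed.

Lemma witness_dominator (s : 'I_k.+1) :
  s != t -> ((t < s)%N -> (A row2 (J t) < A row1 (I s))%O) ->
  witness s \in dominators A (I t) (J t).
Proof.
move=> st late_above; have /and4P[_ lt_tt _ _] := edgeIJ t.
rewrite /witness inE; case: ifP => [lt_st | /negbT]; rewrite /= -?leqNgt.
  have lt_J := J_argmin_lt st.
  rewrite (ltnW (crossing_lt _ _)) (incr_ord_leq J_incr (ltnW lt_st)).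
  by rewrite lt_J (lt_trans lt_tt lt_J).
move=> le_ts; have lt_ts : (t < s)%N by rewrite ltn_neqAle eq_sym st.
have lt_I := late_above lt_ts.
rewrite (incr_ord_leq I_incr (ltnW lt_ts)) (ltnW (crossing_lt _ _)).
by rewrite lt_I (lt_trans lt_tt lt_I).
Qed.

Lemma card_dominators_min_edge : (k <= #|dominators A (I t) (J t)|)%N.
Proof.
have card_others : #|[set~ t]| = k by rewrite cardsC1 card_ord.
rewrite -[k in (k <= _)%N]card_others -(card_imset _ witness_inj).
apply/subset_leq_card/subsetP => p /imsetP[s]; rewrite in_setC1 => st ->.
apply: witness_dominator st _ => lt_ts.
apply: (distinct_lt A_inj (p := (row2, J t)) (q := (row1, I s))) => //.
by rewrite leNgt; apply/negP => lt_s; apply: no_late_edge_below; exists s.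
Qed.

End CrossingEdges.

Theorem lemma8 (d : Order.disp_t) (T : orderType d) (n k : nat) (A : 'M[T]_(2, n)) :
  distinct_entries A -> (1 <= k)%N ->
  ~ (exists I J : 'I_k.+1 -> 'I_n,
       [/\ (forall t, G12_edge A k (I t) (J t)),
           (forall s t : 'I_k.+1, (s < t)%N -> (I s < I t)%N),
           (forall s t : 'I_k.+1, (s < t)%N -> (J s < J t)%N) &
           (I ord_max < J ord0)%N]).
Proof.
move=> A_inj k_gt0 [I [J [edgeIJ I_incr J_incr IJ_cross]]].
have [t _ J_argmin] := @arg_minP _ _ _ ord0 xpredT (fun s => A row2 (J s)) isT.
have {}J_argmin s : (A row2 (J t) <= A row2 (J s))%O by exact: J_argmin.
have many_dom := card_dominators_min_edge A_inj edgeIJ I_incr J_incr IJ_cross J_argmin.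
have /and4P[_ _ few_dom _] := edgeIJ t.
have := leq_trans many_dom few_dom.
by rewrite subn1 leqNgt ltn_predL k_gt0.
Qed.
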